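(* Consider the slotted transmission system and transmission policy $P$ described in the context, with loss probability $p$ satisfying $0<p<1$, feedback delay $d\ge 0$ and threshold $\gamma\ge 0$. Suppose that the estimate $\hat{Q}^r_k$ satisfies $Q^r_k-\hat{Q}^r_k\le\delta$ for all $k=1,2,\dots$, for some $\delta\ge 0$. Then $Q^r_k$ converges almost surely to the interval $0\le Q^r_k\le \gamma+\delta+1$ as $k\to\infty$.
   Context: Time is slotted, slots $k=1,2,\dots$; each slot carries at most one packet transmission over a lossy path. Information packets arrive at the transmitter according to $A_k\in\{0,1\}$ and are held in a transmitter queue $Q^t_{k+1}=[Q^t_k+A_k-S_k]^+$, $Q^t_1=0$, where $[x]^+=\max\{x,0\}$. In slot $k$, $S_k\in\{0,1\}$ indicates that an information packet is sent and $C_k\in\{0,1\}$ indicates that a coded packet is sent ($S_k+C_k\le 1$). Erasures: $X_k=1$ if the packet sent in slot $k$ is erased and $0$ otherwise; $\{X_k\}$ is i.i.d. with $\Pr(X_k=1)=p$, independent of the transmitter's decisions up to slot $k$. The virtual receiver queue evolves as $Q^r_{k+1}=[Q^r_k+S_kX_k-C_k(1-X_k)]^+$ (non-negative integer valued). Feedback reaches the transmitter with delay $d$ slots, so in slot $k$ the transmitter knows $Q^r_{k-d}$ (quantities with non-positive indices are given initial values). The estimator is $\hat{Q}^r_k=Q^r_{k-d}+\sum_{j=k-d}^{k-1}(S_jp-C_j(1-p))$. Transmission policy $P$ with parameter $\gamma\ge 0$: $C_k\in\arg\min_{C\in\{0,1\}}(-\hat{Q}^r_k+\gamma)C$ and $S_k=\min\{Q^t_k+A_k,\,1-C_k\}$.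 *)

From HB Require Import structures.
From mathcomp Require Import all_boot all_order all_algebra.
From mathcomp Require Import all_classical all_reals all_analysis.
Set Implicit Arguments. Unset Strict Implicit. Unset Printing Implicit Defensive.
Import Order.TTheory GRing.Theory Num.Theory.
Local Open Scope classical_set_scope.
Local Open Scope ring_scope.

(* Time slots are indexed by integers k : int; the dynamics are imposed for
   k >= 1, quantities with non-positive indices are arbitrary initial values.
   Binary quantities (A, S, C, X) are booleans (true = 1). *)

Definition Qhat (R : realType) (p : R) (d : nat) (Qr : int -> nat)
    (S C : int -> bool) (k : int) : R :=
  (Qr (k - d%:Z))%:R +
  \sum_(i < d) ((S (k - d%:Z + (i : nat)%:Z))%:R * p
                - (C (k - d%:Z + (i : nat)%:Z))%:R * (1 - p)).

Definition policy_path (R : realType) (p gamma : R) (d : nat)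
    (A S C X : int -> bool) (Qt Qr : int -> nat) : Prop :=
  [/\ Qt 1 = 0%N,
      (forall k : int, 1 <= k ->
         (Qt (k + 1))%:Z
         = Num.max 0 ((Qt k)%:Z + (A k : nat)%:Z - (S k : nat)%:Z)),
      (forall k : int, 1 <= k ->
         (Qr (k + 1))%:Z
         = Num.max 0 ((Qr k)%:Z + (S k : nat)%:Z * (X k : nat)%:Z
                      - (C k : nat)%:Z * (1 - (X k : nat)%:Z))),
      (forall k : int, 1 <= k -> forall c : bool,
         (gamma - Qhat p d Qr S C k) * (C k : nat)%:R
         <= (gamma - Qhat p d Qr S C k) * (c : nat)%:R) &
      (forall k : int, 1 <= k ->
         (S k : nat) = minn (Qt k + A k) (1 - C k))].

(* {X_k}_{k>=1} i.i.d. with Pr(X_k = 1) = p : joint law of (X_1,...,X_n). *)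
Definition iid_erasures (R : realType) (dT : measure_display)
    (T : measurableType dT) (P : probability T R) (X : int -> T -> bool)
    (p : R) : Prop :=
  (forall k : int, 1 <= k -> measurable [set w | X k w]) /\
  forall (n : nat) (b : 'I_n -> bool),
    P [set w | forall i : 'I_n, X (i.+1)%:Z w = b i]
    = (\prod_(i < n) (if b i then p else 1 - p))%:E.

Definition erasure_indep_decisions (R : realType) (dT : measure_display)
    (T : measurableType dT) (P : probability T R) (X S C : int -> T -> bool)
    : Prop :=
  (forall k : int, 1 <= k ->
     measurable [set w | S k w] /\ measurable [set w | C k w]) /\
  forall (k : nat), (1 <= k)%N -> forall (s c : 'I_k -> bool),
    let D := [set w | forall i : 'I_k,
                 S (i.+1)%:Z w = s i /\ C (i.+1)%:Z w = c i] in
    P ([set w | X k%:Z w] `&` D) = (P [set w | X k%:Z w] * P D)%E.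

(** Once the receiver queue exceeds [gamma + delta], the estimate exceeds
   [gamma], so policy P sends a coded packet: the queue can no longer grow,
   and it drops by one at every slot without erasure.  Below the threshold it
   grows by at most one per slot, so [gamma + delta + 1] is never crossed
   again once it is reached.  Since [p < 1], with probability one infinitely
   many slots are erasure-free, and each such slot spent above the threshold
   pulls the queue down by one, so the queue reaches the bounded region. *)

From HB Require Import structures.
From mathcomp Require Import all_boot all_order all_algebra.
From mathcomp Require Import all_classical all_reals all_analysis.
From mathcomp Require Import zify lra.
Import Order.TTheory GRing.Theory Num.Theory.
Local Open Scope classical_set_scope.
Local Open Scope ring_scope.

Lemma eventually_le_of_drift {R : realFieldType} {c : R} {q : nat -> nat}
    {E : nat -> bool} :
  (forall n, (q n.+1 <= (q n).+1)%N) ->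
  (forall n, c < (q n)%:R -> (q n.+1 <= q n)%N) ->
  (forall n, c < (q n)%:R -> E n -> (q n.+1 < q n)%N) ->
  (forall N, exists2 n, (N <= n)%N & E n) ->
  exists N, forall n, (N <= n)%N -> (q n)%:R <= c + 1.
Proof.
move=> q_incr q_nonincr q_decr E_io.
have q_stays_low n : (q n)%:R <= c + 1 -> (q n.+1)%:R <= c + 1.
  move=> qn_le; have [c_lt|qn_le_c] := ltrP c (q n)%:R.
    by apply: le_trans qn_le; rewrite ler_nat q_nonincr.
  apply: le_trans (lerD qn_le_c (lexx 1)).
  by rewrite natr1 ler_nat q_incr.
have [[N qN_le]|never_low] := pselect (exists N, (q N)%:R <= c + 1).
  exists N; elim=> [|n IH]; first by rewrite leqn0 => /eqP <-.
  by rewrite leq_eqVlt => /predU1P[<- //|/IH]; apply: q_stays_low.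
have above n : c < (q n)%:R.
  by rewrite ltNge; apply/negP => qn_le; apply: never_low; exists n; lra.
have q_antitone m n : (m <= n)%N -> (q n <= q m)%N.
  move=> /subnK <-; elim: (n - m)%N => [|k IH] //=.
  by rewrite addSn (leq_trans (q_nonincr _ (above _))).
have q_drops k : exists n, (q n + k <= q 0)%N.
  elim: k => [|k [n IH]]; first by exists 0%N; rewrite addn0.
  have [m n_le_m Em] := E_io n.
  exists m.+1; have := q_decr m (above m) Em; have := q_antitone _ _ n_le_m.
  lia.
by have [n] := q_drops (q 0).+1; rewrite addnS ltnNge leq_addl.
Qed.

Lemma max0_eq (a b : int) :
  a = Num.max 0 b -> (0 <= b -> a = b) /\ (b <= 0 -> a = 0).
Proof. by move=> ->; split=> ?; [exact/max_idPr | exact/max_idPl]. Qed.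

Section PolicyPath.
Local Set Implicit Arguments.
Variables (R : realType) (p gamma delta : R) (d : nat).
Variables (A S C X : int -> bool) (Qt Qr : int -> nat).
Hypothesis threshold_ge0 : 0 <= gamma + delta.
Hypothesis path : policy_path p gamma d A S C X Qt Qr.
Hypothesis estimate_err : forall k : int, 1 <= k ->
  (Qr k)%:R - Qhat p d Qr S C k <= delta.

Lemma Qr_succ_le (k : int) : 1 <= k -> (Qr (k + 1) <= (Qr k).+1)%N.
Proof.
case: path => _ _ Qr_rec _ _ k_ge1.
have := Qr_rec k k_ge1.
by case: (S k); case: (X k); case: (C k) => /= /max0_eq Qr_next; lia.
Qed.

Lemma coded_above_threshold (k : int) :
  1 <= k -> gamma + delta < (Qr k)%:R -> C k /\ ~~ S k.
Proof.
case: path => _ _ _ C_argmin S_def k_ge1 Qr_gt.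
have Qhat_gt : gamma < Qhat p d Qr S C k by have := @estimate_err k k_ge1; lra.
have Ck : C k.
  apply: contraTT Qhat_gt => /negbTE Ck0; rewrite -leNgt.
  by have := C_argmin k k_ge1 true; rewrite Ck0 mulr0 mulr1 subr_ge0.
by split=> //; have := S_def k k_ge1; rewrite Ck minn0; case: (S k).
Qed.

Lemma Qr_step_above_threshold (k : int) :
  1 <= k -> gamma + delta < (Qr k)%:R ->
  (Qr (k + 1) <= Qr k)%N /\ (~~ X k -> (Qr (k + 1) < Qr k)%N).
Proof.
move=> k_ge1 Qr_gt; have [Ck /negbTE Sk] := coded_above_threshold k k_ge1 Qr_gt.
have Qr_gt0 : (0 < Qr k)%N.
  by rewrite -(ltr0n R) (le_lt_trans threshold_ge0 Qr_gt).
case: path => _ _ Qr_rec _ _; have := Qr_rec k k_ge1.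
by rewrite Ck Sk; case: (X k) => /= /max0_eq Qr_next; lia.
Qed.

Lemma Qr_eventually_bounded :
  (forall N, exists2 n, (N <= n)%N & ~~ X (n.+1)%:Z) ->
  exists K : int, forall k : int, K <= k ->
     (0 <= (Qr k)%:R :> R) /\ (Qr k)%:R <= gamma + delta + 1.
Proof.
move=> unerased_io.
pose q n := Qr (n.+1)%:Z.
have succ_int n : (n.+1)%:Z + 1 = (n.+2)%:Z by lia.
have q_step n : (q n.+1 <= (q n).+1)%N.
  by have := @Qr_succ_le (n.+1)%:Z; rewrite succ_int; apply; lia.
have q_above n : gamma + delta < (q n)%:R ->
    (q n.+1 <= q n)%N /\ (~~ X (n.+1)%:Z -> (q n.+1 < q n)%N).
  by have := @Qr_step_above_threshold (n.+1)%:Z; rewrite succ_int; apply; lia.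
have [N q_le] := eventually_le_of_drift q_step
  (fun n h => (q_above n h).1) (fun n h => (q_above n h).2) unerased_io.
exists (N.+1)%:Z => k k_ge; split; first by rewrite ler0n.
have -> : k = ((`|k|%N.-1).+1)%:Z by lia.
by apply: q_le; lia.
Qed.

End PolicyPath.

Lemma le0_of_le_expr (R : realType) (p r : R) :
  `|p| < 1 -> (forall m, r <= p ^+ m) -> r <= 0.
Proof.
move=> p_lt1 r_le.
have le_ev : \forall m \near \oo, r <= p ^+ m by exact: nearW.
exact: (closed_cvg _ (@closed_ge _ r) le_ev _ (cvg_expr p_lt1)).
Qed.

Section IIDErasures.
Local Set Implicit Arguments.
Context (R : realType) (dT : measure_display) (T : measurableType dT)
  (P : probability T R) (p : R) (X : int -> T -> bool).
Hypothesis iidX : iid_erasures P X p.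

Definition bernoulli_pmf (b : bool) : R := if b then p else 1 - p.

Lemma measurable_const_set (b : bool) : measurable [set _ : T | b].
Proof.
by case: b;
  [rewrite (_ : [set _ | true] = setT) | rewrite (_ : [set _ | false] = set0)];
  rewrite // predeqE.
Qed.

Lemma measurable_erasure_pred (g : pred bool) (k : int) : 1 <= k ->
  measurable [set w | g (X k w)].
Proof.
move=> k_ge1; have mXk := iidX.1 k k_ge1.
rewrite (_ : [set w | _] = ([set w | X k w] `&` [set _ | g true])
                          `|` (~` [set w | X k w] `&` [set _ | g false])).
  by apply: measurableU; apply: measurableI;
    [| exact: measurable_const_set | exact: measurableC
     | exact: measurable_const_set].
by apply/seteqP; split=> w /=; case: (X k w) => /=; [left|right|case=> -[]..].
Qed.

Lemma measurable_cylinder n (F : 'I_n -> pred bool) :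
  measurable [set w | forall i : 'I_n, F i (X i.+1%:Z w)].
Proof.
rewrite (_ : [set w | _]
  = \bigcap_(i in [set: 'I_n]) [set w | F i (X i.+1%:Z w)]).
  apply: fin_bigcap_measurable; first exact: finite_finset.
  by move=> i _; apply: measurable_erasure_pred; lia.
by apply/seteqP; split=> w /= Fw i; [move=> _|]; apply: Fw.
Qed.

Lemma cylinder_prob n (F : 'I_n -> pred bool) :
  P [set w | forall i : 'I_n, F i (X i.+1%:Z w)]
  = (\prod_(i < n) \sum_(b | F i b) bernoulli_pmf b)%:E.
Proof.
(* Split the event into the disjoint atoms [(X_1, ..., X_n) = f] it contains;
   summing their product weights expands the product of sums. *)
pose atom (f : {ffun 'I_n -> bool}) :=
  if [forall i, F i (f i)] then [set w | forall i : 'I_n, X i.+1%:Z w = f i]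
  else set0.
have -> : [set w | forall i : 'I_n, F i (X i.+1%:Z w)]
          = \bigcup_(f in [set: {ffun 'I_n -> bool}]) atom f.
  apply/seteqP; split=> w /=.
  - move=> Fw; exists [ffun i : 'I_n => X i.+1%:Z w] => //; rewrite /atom ifT.
      by move=> i; rewrite ffunE.
    by apply/forallP => i; rewrite ffunE.
  - move=> [f _]; rewrite /atom.
    by case: ifP => // /forallP Ff wf i; rewrite wf.
have atom_meas f : [set: {ffun 'I_n -> bool}] f -> measurable (atom f).
  move=> _; rewrite /atom; case: ifP => // _.
  rewrite (_ : [set w | _] = [set w | forall i : 'I_n, X i.+1%:Z w == f i]).
    exact: (measurable_cylinder (fun i b => b == f i)).
  by apply/seteqP; split=> w /= wf i; apply/eqP; exact: wf.
rewrite measure_fin_bigcup //; first last.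
- move=> f g _ _ [w []]; rewrite /atom.
  case: ifP => _ // wf; case: ifP => _ // wg.
  by apply/ffunP => i; rewrite -wf -wg.
- exact: finite_finset.
rewrite (@fsbigE _ _ _ _ setT (index_enum {ffun 'I_n -> bool})) //; first last.
- by move=> i _; rewrite mem_index_enum.
- exact: index_enum_uniq.
rewrite [RHS](_ : _
  = (\prod_(i < n) \sum_b if F i b then bernoulli_pmf b else 0)%:E);
  last by congr EFin; apply: eq_bigr => i _; rewrite big_mkcond.
rewrite bigA_distr_bigA -sumEFin big_mkcond /=; apply: eq_bigr => f _.
rewrite in_setT /atom; case: ifP => Ff.
  rewrite iidX.2; congr EFin; apply: eq_bigr => i _.
  by rewrite (forallP Ff i).
rewrite measure0; move/negbT/forallPn: Ff => [i Fi].
by rewrite (bigD1 i) //= (negbTE Fi) mul0r.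
Qed.

Lemma prod_erased_from N n :
  \prod_(i < n) \sum_(b | (N <= i)%N ==> b) bernoulli_pmf b = p ^+ (n - N).
Proof.
elim: n => [|n IH]; first by rewrite big_ord0 sub0n expr0.
rewrite big_ord_recr /= IH big_mkcond big_bool /=.
case: (leqP N n) => [N_le|n_lt] /=; first by rewrite addr0 subSn // exprSr.
have /eqP -> : (n.+1 - N == 0)%N by rewrite subn_eq0.
have /eqP -> : (n - N == 0)%N by rewrite subn_eq0 ltnW.
by rewrite addrC subrK mulr1.
Qed.

Lemma measurable_erased_from N :
  measurable [set w | forall n, (N <= n)%N -> X n.+1%:Z w].
Proof.
rewrite (_ : [set w | _]
  = \bigcap_(n in [set n | (N <= n)%N]) [set w | X n.+1%:Z w]).
  by apply: bigcap_measurableType => n _; apply: iidX.1; lia.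
by apply/seteqP; split=> w /= Bw n; exact: Bw.
Qed.

Lemma prob_erased_from N : 0 < p < 1 ->
  P [set w | forall n, (N <= n)%N -> X n.+1%:Z w] = 0%E.
Proof.
move=> /andP[p_gt0 p_lt1].
set B := [set w | _].
have PB_le m : (P B <= (p ^+ m)%:E)%E.
  rewrite -(addKn N m) -prod_erased_from -cylinder_prob.
  apply: le_measure; rewrite ?inE.
  - exact: measurable_erased_from.
  - exact: (measurable_cylinder (fun i b => (N <= i)%N ==> b)).
  by move=> w Bw i; apply/implyP; exact: Bw.
have PB_fin : P B \is a fin_num.
  by rewrite ge0_fin_numE // (le_lt_trans (PB_le 0%N)) ?ltry.
rewrite -(fineK PB_fin); congr EFin.
apply/eqP; rewrite eq_le fine_ge0 ?andbT //.
apply: (@le0_of_le_expr _ p); first by rewrite ger0_norm ?ltW.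
by move=> m; rewrite -lee_fin fineK.
Qed.

Lemma unerased_infinitely_often : 0 < p < 1 ->
  {ae P, forall w, forall N, exists2 n, (N <= n)%N & ~~ X n.+1%:Z w}.
Proof.
move=> p01; apply: ae_foralln => N.
exists [set w | forall n, (N <= n)%N -> X n.+1%:Z w]; split.
- exact: measurable_erased_from.
- exact: prob_erased_from.
- move=> w /= no_n n N_le; apply/negPn/negP => Xn.
  by apply: no_n; exists n.
Qed.

End IIDErasures.

Theorem theorem1 (R : realType) (dT : measure_display) (T : measurableType dT)
    (P : probability T R) (p gamma delta : R) (d : nat)
    (A S C X : int -> T -> bool) (Qt Qr : int -> T -> nat) :
  0 < p < 1 -> 0 <= gamma -> 0 <= delta ->
  iid_erasures P X p ->
  erasure_indep_decisions P X S C ->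
  (forall w, policy_path p gamma d (A ^~ w) (S ^~ w) (C ^~ w) (X ^~ w)
                         (Qt ^~ w) (Qr ^~ w)) ->
  (forall w (k : int), 1 <= k ->
     (Qr k w)%:R - Qhat p d (Qr ^~ w) (S ^~ w) (C ^~ w) k <= delta) ->
  {ae P, forall w, exists K : int, forall k : int, K <= k ->
     (0 <= (Qr k w)%:R :> R) /\ (Qr k w)%:R <= gamma + delta + 1}.
Proof.
move=> p01 gamma_ge0 delta_ge0 iidX _ path estimate_err.
apply: filterS (unerased_infinitely_often iidX p01) => w unerased_io.
exact: Qr_eventually_bounded (addr_ge0 gamma_ge0 delta_ge0) (path w)
  (estimate_err w) unerased_io.
Qed.
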